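(* Every separable connected almost totally disconnected compact space is metrizable.
   Context: For a set $\Gamma$, $\Sigma_0^1[0,1]^\Gamma$ is the subspace of $[0,1]^\Gamma$ (product topology) consisting of those $x$ with $x_\gamma\in\{0,1\}$ for all but countably many $\gamma$. A compact space is almost totally disconnected if it is homeomorphic to a subspace of $\Sigma_0^1[0,1]^\Gamma$ for some set $\Gamma$. *)

From Stdlib Require Import Reals List.
Open Scope R_scope.

Definition is_topology {X : Type} (op : (X -> Prop) -> Prop) : Prop :=
  op (fun _ => True) /\
  (forall U V, op U -> op V -> op (fun x => U x /\ V x)) /\
  (forall F : (X -> Prop) -> Prop, (forall U, F U -> op U) ->
     op (fun x => exists U, F U /\ U x)).

Definition countable_set {A : Type} (S : A -> Prop) : Prop :=
  exists h : A -> nat, forall a b, S a -> S b -> h a = h b -> a = b.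

Definition compact_space {X : Type} (op : (X -> Prop) -> Prop) : Prop :=
  forall F : (X -> Prop) -> Prop,
    (forall U, F U -> op U) ->
    (forall x, exists U, F U /\ U x) ->
    exists l : list (X -> Prop),
      (forall U, In U l -> F U) /\ (forall x, exists U, In U l /\ U x).

Definition connected_space {X : Type} (op : (X -> Prop) -> Prop) : Prop :=
  forall U V, op U -> op V ->
    (forall x, U x \/ V x) -> (forall x, ~ (U x /\ V x)) ->
    (forall x, ~ U x) \/ (forall x, ~ V x).

Definition separable_space {X : Type} (op : (X -> Prop) -> Prop) : Prop :=
  exists D : X -> Prop, countable_set D /\
    (forall U, op U -> (exists x, U x) -> exists x, U x /\ D x).

Definition metrizable_space {X : Type} (op : (X -> Prop) -> Prop) : Prop :=
  exists d : X -> X -> R,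
    (forall x y, d x y = 0 <-> x = y) /\
    (forall x y, d x y = d y x) /\
    (forall x y z, d x z <= d x y + d y z) /\
    (forall U, op U <->
       (forall x, U x -> exists eps, 0 < eps /\ forall y, d x y < eps -> U y)).

(* Product topology on R^Gamma = (Gamma -> R): basic neighbourhoods
   constrain finitely many coordinates. *)
Definition product_open {G : Type} (V : (G -> R) -> Prop) : Prop :=
  forall x, V x -> exists (gs : list G) (eps : R), 0 < eps /\
    forall y, (forall g, In g gs -> Rabs (y g - x g) < eps) -> V y.

Definition in_Sigma01 {G : Type} (x : G -> R) : Prop :=
  (forall g, 0 <= x g <= 1) /\
  countable_set (fun g => x g <> 0 /\ x g <> 1).

(* X is almost totally disconnected: homeomorphic to a subspace of
   Sigma_0^1[0,1]^Gamma (with the subspace topology of the product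
   topology) for some set Gamma. *)
Definition almost_totally_disconnected {X : Type}
    (op : (X -> Prop) -> Prop) : Prop :=
  exists (G : Type) (f : X -> (G -> R)),
    (forall x, in_Sigma01 (f x)) /\
    (forall x y, f x = f y -> x = y) /\
    (forall V, product_open V -> op (fun x => V (f x))) /\
    (forall U, op U -> exists V, product_open V /\ forall x, U x <-> V (f x)).

From Stdlib Require Import Reals List Lra Lia Cantor ClassicalEpsilon
  FunctionalExtensionality PropExtensionality.
Open Scope R_scope.

(* Let f : X -> [0,1]^G be an embedding into the Sigma-product and D a
   countable dense subset of X.  Each f d has only countably many
   coordinates outside {0,1}, so the set of coordinates g at which some
   point of D takes a value strictly between 0 and 1 is countable.  For any
   other coordinate g the open set {x | 0 < f x g < 1} misses D, hence is
   empty, so f _ g is a continuous {0,1}-valued function and, X being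
   connected, it is constant.  Thus f only varies along a countable list
   g_0, g_1, ... of coordinates, and
       d(x, y) = sup_n |f x g_n - f y g_n| / (n+1)
   is a metric inducing the topology of X. *)

Lemma to_nat_inj (p q : nat * nat) : to_nat p = to_nat q -> p = q.
Proof.
  intro Hpq. rewrite <- (cancel_of_to p), <- (cancel_of_to q). now f_equal.
Qed.

Lemma countable_union {A B : Type} (D : A -> Prop) (S : A -> B -> Prop) :
  countable_set D -> (forall a, countable_set (S a)) ->
  countable_set (fun b => exists a, D a /\ S a b).
Proof.
  intros [hD HhD] HS.
  destruct (choice (fun a h => forall b c, S a b -> S a c -> h b = h c -> b = c) HS)
    as [h Hh].
  destruct (choice (fun b n => (exists a, D a /\ S a b /\ n = to_nat (hD a, h a b)) \/
                               ~ (exists a, D a /\ S a b)))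
    as [code Hcode].
  { intro b. destruct (classic (exists a, D a /\ S a b)) as [[a Ha]|Hno].
    - exists (to_nat (hD a, h a b)). left. exists a. tauto.
    - exists 0%nat. now right. }
  exists code. intros b c [a Ha] [a' Ha'] Heq.
  destruct (Hcode b) as [[ab [Dab [Sab Eb]]]|]; [|exfalso; eauto].
  destruct (Hcode c) as [[ac [Dac [Sac Ec]]]|]; [|exfalso; eauto].
  rewrite Eb, Ec in Heq. apply to_nat_inj in Heq. injection Heq as HhD_eq Hh_eq.
  assert (ab = ac) as <- by now apply HhD.
  now apply (Hh ab).
Qed.

Lemma countable_enumeration {B : Type} (S : B -> Prop) :
  countable_set S -> exists K : nat -> option B, forall b, S b -> exists n, K n = Some b.
Proof.
  intros [h Hh].
  destruct (choice (fun n o => forall b, S b -> h b = n -> o = Some b)) as [K HK].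
  { intro n. destruct (classic (exists b, S b /\ h b = n)) as [[b [Sb Hb]]|Hno].
    - exists (Some b). intros c Sc Hc. f_equal. apply Hh; congruence.
    - exists None. intros c Sc Hc. exfalso. eauto. }
  exists K. intros b Sb. exists (h b). now apply HK.
Qed.

Lemma product_open_ext {G : Type} (V W : (G -> R) -> Prop) :
  (forall y, V y <-> W y) -> product_open V -> product_open W.
Proof.
  intros HVW HV x Wx. destruct (HV x (proj2 (HVW x) Wx)) as [gs [eps [Heps H]]].
  exists gs, eps. split; [exact Heps|]. intros y Hy. apply HVW, H, Hy.
Qed.

Lemma product_open_interval {G : Type} (g : G) (a b : R) :
  product_open (fun y : G -> R => a < y g < b).
Proof.
  intros x Hx. exists (g :: nil), (Rmin (x g - a) (b - x g)). split.
  - apply Rmin_pos; lra.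
  - intros y Hy. specialize (Hy g (or_introl eq_refl)). apply Rabs_def2 in Hy.
    pose proof (Rmin_l (x g - a) (b - x g)). pose proof (Rmin_r (x g - a) (b - x g)).
    lra.
Qed.

Lemma product_open_and {G : Type} (V W : (G -> R) -> Prop) :
  product_open V -> product_open W -> product_open (fun y => V y /\ W y).
Proof.
  intros HV HW x [Vx Wx].
  destruct (HV x Vx) as [g1 [e1 [He1 H1]]]. destruct (HW x Wx) as [g2 [e2 [He2 H2]]].
  exists (g1 ++ g2), (Rmin e1 e2). split; [now apply Rmin_pos|].
  intros y Hy. pose proof (Rmin_l e1 e2). pose proof (Rmin_r e1 e2).
  split; [apply H1|apply H2]; intros g Hg;
    (assert (Rabs (y g - x g) < Rmin e1 e2) by (apply Hy, in_or_app; auto); lra).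
Qed.

Lemma product_open_forall_lt {G : Type} (V : nat -> (G -> R) -> Prop) (N : nat) :
  (forall k, product_open (V k)) ->
  product_open (fun y => forall k, (k < N)%nat -> V k y).
Proof.
  intro HV. induction N as [|N IH].
  - intros x _. exists nil, 1. split; [lra|]. intros y _ k Hk. lia.
  - apply product_open_ext with (fun y => (forall k, (k < N)%nat -> V k y) /\ V N y).
    + intro y. split.
      * intros [Hlt HN] k Hk. destruct (Nat.eq_dec k N) as [->|]; [exact HN|].
        apply Hlt. lia.
      * intro H. split; [intros k Hk|]; apply H; lia.
    + now apply product_open_and.
Qed.

(* On a connected space, a continuous real function with values in {0, 1}
   is constant; continuity is only needed for preimages of open intervals. *)
Lemma connected_two_valued_constant {X : Type} (op : (X -> Prop) -> Prop)
    (phi : X -> R) :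
  connected_space op ->
  (forall a b, op (fun x => a < phi x < b)) ->
  (forall x, phi x = 0 \/ phi x = 1) ->
  forall x y, phi x = phi y.
Proof.
  intros Hconn Hcont H01.
  assert (Hsplit : (forall x, ~ (/2 < phi x < 2)) \/ (forall x, ~ (-1 < phi x < /2))).
  { apply Hconn; try apply Hcont.
    - intro x. destruct (H01 x) as [E|E]; rewrite E; [right|left]; lra.
    - intros x Hx. lra. }
  intros x y.
  destruct Hsplit as [Hn|Hn]; specialize (Hn x) as Hx; specialize (Hn y) as Hy;
    destruct (H01 x) as [E|E]; destruct (H01 y) as [E'|E']; rewrite ?E, ?E' in *;
    auto; lra.
Qed.

Lemma inv_INR_S_bounds (n : nat) : 0 < / INR (S n) <= 1.
Proof.
  assert (1 <= INR (S n)) by (rewrite S_INR; pose proof (pos_INR n); lra).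
  split; [apply Rinv_0_lt_compat; lra|].
  rewrite <- Rinv_1. apply Rinv_le_contravar; lra.
Qed.

Lemma inv_INR_S_small (eps : R) : 0 < eps -> exists N, / INR (S N) < eps.
Proof.
  intro He. destruct (INR_unbounded (/ eps)) as [N HN]. exists N.
  rewrite S_INR. pose proof (Rinv_0_lt_compat _ He).
  replace eps with (/ / eps) by (field; lra).
  apply Rinv_lt_contravar; [apply Rmult_lt_0_compat|]; lra.
Qed.

Lemma common_radius {A Y : Type} (m : Y -> R) (Q : A -> Y -> Prop) :
  (forall a, exists del, 0 < del /\ forall y, m y < del -> Q a y) ->
  forall l, exists del, 0 < del /\ forall y, m y < del -> forall a, In a l -> Q a y.
Proof.
  intros HQ l. induction l as [|a l [del [Hdel IH]]].
  - exists 1. split; [lra|]. intros y _ a [].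
  - destruct (HQ a) as [del' [Hdel' Ha]].
    exists (Rmin del del'). split; [now apply Rmin_pos|].
    intros y Hy. pose proof (Rmin_l del del'). pose proof (Rmin_r del del').
    intros b [<-|Hb]; [apply Ha|apply IH]; auto; lra.
Qed.

Section WeightedMetric.

Variables (X G : Type) (f : X -> G -> R).
Hypothesis f_unit : forall x g, 0 <= f x g <= 1.
(* [K] lists (some of) the coordinates; [None] entries are skipped. *)
Variable K : nat -> option G.

Definition coord_gap (x y : X) (n : nat) : R :=
  match K n with Some g => Rabs (f x g - f y g) * / INR (S n) | None => 0 end.

Lemma coord_gap_bounds x y n : 0 <= coord_gap x y n <= / INR (S n).
Proof.
  pose proof (inv_INR_S_bounds n). unfold coord_gap. destruct (K n) as [g|]; [|lra].
  pose proof (f_unit x g). pose proof (f_unit y g).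
  assert (0 <= Rabs (f x g - f y g) <= 1) by (split; [apply Rabs_pos|apply Rabs_le; lra]).
  split; [apply Rmult_le_pos; lra|].
  rewrite <- (Rmult_1_l (/ INR (S n))) at 2. apply Rmult_le_compat_r; lra.
Qed.

Definition weighted_metric (x y : X) : R.
Proof.
  refine (proj1_sig (completeness (fun r => exists n, r = coord_gap x y n) _ _)).
  - exists 1. intros r [n ->].
    pose proof (coord_gap_bounds x y n). pose proof (inv_INR_S_bounds n). lra.
  - exists (coord_gap x y 0). eauto.
Defined.

Lemma weighted_metric_ge x y n : coord_gap x y n <= weighted_metric x y.
Proof.
  unfold weighted_metric.
  match goal with |- context [proj1_sig ?c] => destruct (proj2_sig c) as [Hub _] end.
  apply Hub. eauto.
Qed.

Lemma weighted_metric_le x y M : (forall n, coord_gap x y n <= M) -> weighted_metric x y <= M.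
Proof.
  intro H. unfold weighted_metric.
  match goal with |- context [proj1_sig ?c] => destruct (proj2_sig c) as [_ Hlub] end.
  apply Hlub. intros r [n ->]. apply H.
Qed.

Lemma weighted_metric_refl x : weighted_metric x x = 0.
Proof.
  apply Rle_antisym.
  - apply weighted_metric_le. intro n. unfold coord_gap.
    destruct (K n); [rewrite Rminus_diag, Rabs_R0|]; lra.
  - pose proof (weighted_metric_ge x x 0). pose proof (coord_gap_bounds x x 0). lra.
Qed.

Lemma weighted_metric_sym x y : weighted_metric x y = weighted_metric y x.
Proof.
  assert (Hgap : forall x y n, coord_gap x y n = coord_gap y x n).
  { intros a b n. unfold coord_gap. destruct (K n); auto. now rewrite Rabs_minus_sym. }
  apply Rle_antisym; apply weighted_metric_le; intro n; rewrite Hgap;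
    apply weighted_metric_ge.
Qed.

Lemma weighted_metric_triangle x y z :
  weighted_metric x z <= weighted_metric x y + weighted_metric y z.
Proof.
  apply weighted_metric_le. intro n.
  pose proof (weighted_metric_ge x y n). pose proof (weighted_metric_ge y z n).
  enough (coord_gap x z n <= coord_gap x y n + coord_gap y z n) by lra.
  unfold coord_gap. destruct (K n) as [g|]; [|lra]. pose proof (inv_INR_S_bounds n).
  rewrite <- Rmult_plus_distr_r. apply Rmult_le_compat_r; [lra|].
  replace (f x g - f z g) with ((f x g - f y g) + (f y g - f z g)) by ring.
  apply Rabs_triang.
Qed.

Lemma listed_coord_bound x y n g :
  K n = Some g -> Rabs (f x g - f y g) <= INR (S n) * weighted_metric x y.
Proof.
  intro Hn. pose proof (weighted_metric_ge x y n) as Hge. unfold coord_gap in Hge.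
  rewrite Hn in Hge. pose proof (inv_INR_S_bounds n).
  assert (HS : 0 < INR (S n)) by (apply lt_0_INR; lia).
  apply Rmult_le_reg_r with (/ INR (S n)); [lra|].
  replace (INR (S n) * weighted_metric x y * / INR (S n)) with (weighted_metric x y)
    by (field; lra).
  exact Hge.
Qed.

Lemma weighted_metric_le_of_cylinder x y r N :
  / INR (S N) <= r ->
  (forall k g, (k < N)%nat -> K k = Some g -> Rabs (f x g - f y g) <= r) ->
  weighted_metric x y <= r.
Proof.
  intros HN Hcyl. apply weighted_metric_le. intro n.
  pose proof (inv_INR_S_bounds n). pose proof (inv_INR_S_bounds N).
  destruct (Nat.le_gt_cases N n) as [Hle|Hlt].
  - pose proof (coord_gap_bounds x y n).
    assert (/ INR (S n) <= / INR (S N)) by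
      (apply Rinv_le_contravar; [apply lt_0_INR; lia|apply le_INR; lia]).
    lra.
  - unfold coord_gap. destruct (K n) as [g|] eqn:Hg; [|lra].
    pose proof (Hcyl n g Hlt Hg).
    assert (Rabs (f x g - f y g) * / INR (S n) <= Rabs (f x g - f y g)).
    { rewrite <- (Rmult_1_r (Rabs (f x g - f y g))) at 2.
      apply Rmult_le_compat_l; [apply Rabs_pos|lra]. }
    lra.
Qed.

Hypothesis unlisted_constant :
  forall g, (forall n, K n <> Some g) -> forall x y, f x g = f y g.

Lemma coord_continuous x g e :
  0 < e -> exists del, 0 < del /\
    forall y, weighted_metric x y < del -> Rabs (f y g - f x g) < e.
Proof.
  intro He. destruct (classic (exists n, K n = Some g)) as [[n Hn]|Hno].
  - assert (HS : 0 < INR (S n)) by (apply lt_0_INR; lia).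
    exists (e / INR (S n)). split; [apply Rdiv_lt_0_compat; lra|].
    intros y Hy. rewrite Rabs_minus_sym.
    pose proof (listed_coord_bound x y n g Hn).
    assert (INR (S n) * weighted_metric x y < e).
    { apply Rmult_lt_compat_l with (r := INR (S n)) in Hy; [|lra].
      replace (INR (S n) * (e / INR (S n))) with e in Hy by (field; lra). lra. }
    lra.
  - exists 1. split; [lra|]. intros y _.
    rewrite (unlisted_constant g (fun n Hn => Hno (ex_intro _ n Hn)) y x).
    rewrite Rminus_diag, Rabs_R0. exact He.
Qed.

Lemma weighted_metric_eq0 x y : weighted_metric x y = 0 -> f x = f y.
Proof.
  intro H0. apply functional_extensionality. intro g.
  destruct (classic (exists n, K n = Some g)) as [[n Hn]|Hno].
  - pose proof (listed_coord_bound x y n g Hn) as Hb. rewrite H0, Rmult_0_r in Hb.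
    pose proof (Rabs_pos (f x g - f y g)).
    apply Rminus_diag_uniq. destruct (Req_dec (f x g - f y g) 0) as [|Hne]; [easy|].
    exfalso. apply (Rabs_no_R0 _ Hne). lra.
  - apply unlisted_constant. intros n Hn. eauto.
Qed.

End WeightedMetric.

Lemma op_ext {X : Type} (op : (X -> Prop) -> Prop) (U V : X -> Prop) :
  (forall x, U x <-> V x) -> op U -> op V.
Proof.
  intros HUV HU. replace V with U; [exact HU|].
  apply functional_extensionality. intro x. apply propositional_extensionality, HUV.
Qed.

Section ListedEmbedding.

Variables (X G : Type) (op : (X -> Prop) -> Prop) (f : X -> G -> R).
Hypothesis f_unit : forall x g, 0 <= f x g <= 1.
Variable K : nat -> option G.
Hypothesis unlisted_constant :
  forall g, (forall n, K n <> Some g) -> forall x y, f x g = f y g.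

Let d : X -> X -> R := weighted_metric X G f f_unit K.

Lemma open_is_metric_open (U : X -> Prop) :
  (exists V, product_open V /\ forall x, U x <-> V (f x)) ->
  forall x, U x -> exists eps, 0 < eps /\ forall y, d x y < eps -> U y.
Proof.
  intros [V [HV HUV]] x Ux.
  destruct (HV (f x) (proj1 (HUV x) Ux)) as [gs [e [He Hgs]]].
  destruct (common_radius (d x) (fun g y => Rabs (f y g - f x g) < e)) with (l := gs)
    as [del [Hdel Hclose]].
  { intro g. exact (coord_continuous X G f f_unit K unlisted_constant x g e He). }
  exists del. split; [exact Hdel|]. intros y Hy. apply HUV, Hgs.
  intros g Hg. now apply Hclose.
Qed.

(* Conversely a d-open set is a union of preimages of open cylinders. *)
Lemma metric_open_is_open (U : X -> Prop) :
  (forall F, (forall W, F W -> op W) -> op (fun x => exists W, F W /\ W x)) ->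
  (forall V, product_open V -> op (fun x => V (f x))) ->
  (forall x, U x -> exists eps, 0 < eps /\ forall y, d x y < eps -> U y) ->
  op U.
Proof.
  intros op_union f_cont HU.
  apply op_ext with (fun z => exists W, (op W /\ forall w, W w -> U w) /\ W z).
  2: { apply op_union. intros W [HW _]. exact HW. }
  intro z. split; [intros [W [[_ HWU] Wz]]; auto|].
  intro Uz. destruct (HU z Uz) as [eps [Heps Hball]].
  destruct (inv_INR_S_small (eps / 2)) as [N HN]; [lra|].
  set (cylinder := fun k (y : G -> R) =>
         match K k with Some g => f z g - eps / 2 < y g < f z g + eps / 2 | None => True end).
  exists (fun w => forall k, (k < N)%nat -> cylinder k (f w)). split; [split|].
  - apply (f_cont (fun y => forall k, (k < N)%nat -> cylinder k y)).
    apply product_open_forall_lt. intro k. unfold cylinder. destruct (K k) as [g|].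
    + apply product_open_interval.
    + intros y _. exists nil, 1. split; [lra|]. auto.
  - intros w Hw. apply Hball.
    enough (d z w <= eps / 2) by lra.
    apply weighted_metric_le_of_cylinder with N; [lra|].
    intros k g Hk Hg. specialize (Hw k Hk). unfold cylinder in Hw. rewrite Hg in Hw.
    apply Rabs_le. lra.
  - intros k _. unfold cylinder. destruct (K k); [lra|exact I].
Qed.

Lemma metrizable_of_listed_embedding :
  (forall F, (forall W, F W -> op W) -> op (fun x => exists W, F W /\ W x)) ->
  (forall x y, f x = f y -> x = y) ->
  (forall V, product_open V -> op (fun x => V (f x))) ->
  (forall U, op U -> exists V, product_open V /\ forall x, U x <-> V (f x)) ->
  metrizable_space op.
Proof.
  intros op_union f_inj f_cont f_open. exists d. split; [|split; [|split]].
  - intros x y. split.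
    + intro H0. apply f_inj. exact (weighted_metric_eq0 X G f f_unit K unlisted_constant x y H0).
    + intros <-. apply weighted_metric_refl.
  - apply weighted_metric_sym.
  - apply weighted_metric_triangle.
  - intro U. split.
    + intro HU. apply open_is_metric_open, f_open, HU.
    + now apply metric_open_is_open.
Qed.

End ListedEmbedding.

Lemma dense_two_valued_coord {X G : Type} (op : (X -> Prop) -> Prop)
    (f : X -> G -> R) (D : X -> Prop) (g : G) :
  (forall U, op U -> (exists x, U x) -> exists x, U x /\ D x) ->
  (forall V, product_open V -> op (fun x => V (f x))) ->
  (forall x, 0 <= f x g <= 1) ->
  ~ (exists d, D d /\ f d g <> 0 /\ f d g <> 1) ->
  forall x, f x g = 0 \/ f x g = 1.
Proof.
  intros HD f_cont Hunit Hno x.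
  destruct (classic (f x g = 0 \/ f x g = 1)) as [|Hmid]; [assumption|]. exfalso.
  assert (Hx : 0 < f x g < 1) by (pose proof (Hunit x); lra).
  destruct (HD (fun z => 0 < f z g < 1)) as [z [Hz Dz]]; [|now exists x|].
  - apply (f_cont (fun y => 0 < y g < 1)), product_open_interval.
  - apply Hno. exists z. repeat split; auto; lra.
Qed.

Theorem mainTheorem5 (X : Type) (op : (X -> Prop) -> Prop) :
  is_topology op ->
  compact_space op ->
  separable_space op ->
  connected_space op ->
  almost_totally_disconnected op ->
  metrizable_space op.
Proof.
  intros [_ [_ op_union]] _ [D [D_count D_dense]] Hconn
    [G [f [f_sigma [f_inj [f_cont f_open]]]]].
  assert (f_unit : forall x g, 0 <= f x g <= 1) by (intros x g; apply f_sigma).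
  set (essential := fun g => exists d, D d /\ f d g <> 0 /\ f d g <> 1).
  assert (Hess : countable_set essential).
  { apply countable_union; [exact D_count|]. intro x. apply f_sigma. }
  destruct (countable_enumeration essential Hess) as [K HK].
  (* Every other coordinate is {0,1}-valued, hence constant by connectedness. *)
  apply (metrizable_of_listed_embedding X G op f f_unit K); try assumption.
  intros g Hunlisted.
  apply (connected_two_valued_constant op (fun x => f x g) Hconn).
  - intros a b. apply (f_cont (fun y => a < y g < b)), product_open_interval.
  - apply (dense_two_valued_coord op f D g D_dense f_cont (fun x => f_unit x g)).
    intros Hg. destruct (HK g Hg) as [n Hn]. exact (Hunlisted n Hn).
Qed.
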